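(* Let $\psi:(0,1]\to(0,\infty)$ with $\psi(1)=1$ and $\lim_{r\to0+}\psi(r)=0$, and let $f\in C^\psi(\mathbb{R}^d)$. (i) If $I_\psi\subset(1,2)$, then for every sufficiently small $\varepsilon>0$ there exists $C=C(d,\psi,\varepsilon)>0$ such that $\|Df\|_{C^0}\le C\|f\|_{C^0}+\varepsilon[Df]_{C^{-1;\psi}}$. (ii) If $I_\psi\subset(2,3)$, then for every sufficiently small $\varepsilon>0$ there exists $C=C(d,\psi,\varepsilon)>0$ such that $\|Df\|_{C^0}+\|D^2f\|_{C^0}\le C\|f\|_{C^0}+\varepsilon[D^2f]_{C^{-2;\psi}}$.
   Context: $g:(0,1]\to(0,\infty)$ is almost increasing if $c\,g(r)\le g(R)$ for some $c\in(0,1]$ and all $0<r\le R\le1$, almost decreasing if $g(R)\le Cg(r)$ for some $C\ge1$ and all $0<r\le R\le1$. $M_\psi=\inf\{\alpha: \psi(r)/r^\alpha\text{ almost decreasing}\}$, $m_\psi=\sup\{\alpha: \psi(r)/r^\alpha\text{ almost increasing}\}$, $I_\psi=[m_\psi,M_\psi]$. $\|f\|_{C^0}=\sup|f|$, $\|D^jf\|_{C^0}=\max_{|\gamma|=j}\|D^\gamma f\|_{C^0}$. For $j\in\mathbb{N}_0$, $[f]_{C^{-j;\psi}}=\sup_x\sup_{0<|h|\le1}\frac{|f(x+h)-f(x)|}{\psi(|h|)|h|^{-j}}$ and $[D^kf]_{C^{-k;\psi}}=\max_{|\gamma|=k}[D^\gamma f]_{C^{-k;\psi}}$. If $m_\psi\in(k,k+1]$,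 $k\in\mathbb{N}_0$, $C^\psi(\mathbb{R}^d)$ is the set of continuous $f$ with $D^\gamma f$ bounded continuous for $|\gamma|\le k$ and $[D^\gamma f]_{C^{-k;\psi}}<\infty$ for $|\gamma|=k$. *)

From HB Require Import structures.
From mathcomp Require Import all_boot all_order all_algebra.
From mathcomp Require Import all_classical all_reals all_analysis.
Set Implicit Arguments. Unset Strict Implicit. Unset Printing Implicit Defensive.
Import Order.TTheory GRing.Theory Num.Theory.
Import numFieldNormedType.Exports.
Local Open Scope classical_set_scope.
Local Open Scope ring_scope.

Section Defs.
Context {R : realType} {d : nat}.

Definition almost_incr (g : R -> R) : Prop :=
  exists c : R, 0 < c <= 1 /\
    forall r s : R, 0 < r -> r <= s -> s <= 1 -> c * g r <= g s.
Definition almost_decr (g : R -> R) : Prop :=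
  exists C : R, 1 <= C /\
    forall r s : R, 0 < r -> r <= s -> s <= 1 -> g s <= C * g r.

(* M_psi and m_psi as extended reals (inf of empty set = +oo, sup of empty = -oo) *)
Definition Mpsi (psi : R -> R) : \bar R :=
  ereal_inf [set (a%:E)%E | a in [set a : R | almost_decr (fun r => psi r / r `^ a)]].
Definition mpsi (psi : R -> R) : \bar R :=
  ereal_sup [set (a%:E)%E | a in [set a : R | almost_incr (fun r => psi r / r `^ a)]].

Definition enorm (h : 'rV[R]_d) : R := Num.sqrt (\sum_(i < d) h 0 i ^+ 2).

Definition evec (i : 'I_d) : 'rV[R]_d := delta_mx 0 i.
Definition pd (i : 'I_d) (f : 'rV[R]_d -> R) : 'rV[R]_d -> R :=
  fun x => 'D_(evec i) f x.
(* D^gamma f, gamma given as a sequence of coordinate indices *)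
Definition pds (s : seq 'I_d) (f : 'rV[R]_d -> R) : 'rV[R]_d -> R :=
  foldr pd f s.

Definition C0norm (g : 'rV[R]_d -> R) : \bar R :=
  ereal_sup [set (`|g x|%:E)%E | x in setT].
Definition DjC0norm (j : nat) (f : 'rV[R]_d -> R) : \bar R :=
  \big[maxe/-oo%E]_(s : j.-tuple 'I_d) C0norm (pds s f).

Definition semi (j : nat) (psi : R -> R) (g : 'rV[R]_d -> R) : \bar R :=
  ereal_sup [set ((`|g (xh.1 + xh.2) - g xh.1| /
                   (psi (enorm xh.2) * enorm xh.2 ^- j))%:E)%E
            | xh in [set xh : 'rV[R]_d * 'rV[R]_d | 0 < enorm xh.2 <= 1]].
Definition Dksemi (k : nat) (psi : R -> R) (f : 'rV[R]_d -> R) : \bar R :=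
  \big[maxe/-oo%E]_(s : k.-tuple 'I_d) semi k psi (pds s f).

Definition bounded_fun (g : 'rV[R]_d -> R) : Prop :=
  exists M : R, forall x, `|g x| <= M.

Definition Ck_psi (k : nat) (psi : R -> R) (f : 'rV[R]_d -> R) : Prop :=
  continuous f /\
  (forall s : seq 'I_d, (size s < k)%N ->
     forall (i : 'I_d) (x : 'rV[R]_d), derivable (pds s f) x (evec i)) /\
  (forall s : seq 'I_d, (size s <= k)%N ->
     continuous (pds s f) /\ bounded_fun (pds s f)) /\
  (forall s : seq 'I_d, size s = k -> (semi k psi (pds s f) < +oo)%E).

Definition Cpsi (psi : R -> R) (f : 'rV[R]_d -> R) : Prop :=
  forall k : nat, ((k%:R)%:E < mpsi psi)%E -> (mpsi psi <= (k.+1%:R)%:E)%E ->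
    Ck_psi k psi f.
End Defs.

(* If [psi r / r ^ a] is almost increasing with [a > k], then [psi t <= delta * t ^ k]
   for all small [t], so the [C^{-k;psi}] seminorm [S] of [g] bounds the increment
   [|g (x + t e_i) - g x|] by [S * delta] for such [t].  For [|g| <= M], the mean value
   theorem on [[x, x + h e_i]] finds [0 < t < h] with [|D_i g (x + t e_i)| <= 2 M / h],
   hence [|D_i g x| <= 2 M / h + |D_i g (x + t e_i) - D_i g x|].  With [g = f] and
   [k = 1] this is (i).  For (ii), taking [g = D_j f] bounds [D^2 f] by [D f] and [S],
   while taking [g = f] with step [h / 4] and bounding the increment of [D_j f] by
   the mean value theorem bounds [D f] by [f] and [h / 4 * ‖D^2 f‖]; the two
   inequalities are then solved for [‖D f‖ + ‖D^2 f‖]. *)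

From Pilot Require Import Defs.
From HB Require Import structures.
From mathcomp Require Import all_boot all_order all_algebra.
From mathcomp Require Import all_classical all_reals all_analysis.
From mathcomp Require Import ring lra.
Import Order.TTheory GRing.Theory Num.Theory.
Import numFieldNormedType.Exports.
Local Open Scope classical_set_scope.
Local Open Scope ring_scope.

Section Exponents.
Context {R : realType}.

Lemma powR_root {x p : R} : 0 < x <= 1 -> 0 < p ->
  let r := x `^ p^-1 in 0 < r <= 1 /\ r `^ p = x.
Proof.
move=> /andP[x0 x1] p0 /=; split; last first.
  by rewrite -powRrM mulVf ?gt_eqF// powRr1 ?ltW.
rewrite powR_gt0 //=; apply: (@le_trans _ _ (1 `^ p^-1)); last by rewrite powR1.
apply: ge0_ler_powR => //; rewrite ?invr_ge0 ?nnegrE ?ltW //.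
Qed.

Context {psi : R -> R}.
Hypothesis psi1 : psi 1 = 1.

Lemma almost_incr_psi_le (a : R) : almost_incr (fun r => psi r / r `^ a) ->
  exists2 c, 0 < c <= 1 & forall t, 0 < t -> t <= 1 -> psi t <= t `^ a / c.
Proof.
move=> [c [/andP[c0 c1] Hc]]; exists c => [|t t0 t1]; first by rewrite c0.
have := Hc t 1 t0 t1 (lexx _); rewrite psi1 powR1 divr1 mulrA.
by rewrite ler_pdivrMr ?powR_gt0 // mul1r ler_pdivlMr // mulrC.
Qed.

Lemma almost_decr_psi_ge (b : R) : almost_decr (fun r => psi r / r `^ b) ->
  exists2 C, 1 <= C & forall t, 0 < t -> t <= 1 -> t `^ b / C <= psi t.
Proof.
move=> [C [C1 HC]]; have C0 : 0 < C by apply: lt_le_trans C1.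
exists C => // t t0 t1.
have := HC t 1 t0 t1 (lexx _); rewrite psi1 powR1 divr1 mulrA.
by rewrite ler_pdivlMr ?powR_gt0 // mul1r ler_pdivrMr // mulrC.
Qed.

(* [t ^ b / C <= psi t <= t ^ a / c] fails at the [t] with [t ^ (a - b) = c / (2 C)]. *)
Lemma almost_incr_decr_exp_le {a b : R} :
  almost_incr (fun r => psi r / r `^ a) ->
  almost_decr (fun r => psi r / r `^ b) -> a <= b.
Proof.
move=> /almost_incr_psi_le[c /andP[c0 c1] Hc] /almost_decr_psi_ge[C C1 HC].
have C0 : 0 < C by apply: lt_le_trans C1.
rewrite leNgt; apply/negP => ba.
have x01 : 0 < c / (2 * C) <= 1.
  by rewrite divr_gt0 ?mulr_gt0 //= ler_pdivrMr ?mulr_gt0 // mul1r; lra.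
have ab0 : 0 < a - b by rewrite subr_gt0.
have [/andP[r0 r1] rab] := powR_root x01 ab0.
set r := _ `^ _ in r0 r1 rab.
have ra : r `^ a = r `^ b * (c / (2 * C)).
  by rewrite -rab -powRD ?(gt_eqF r0, implybT) // addrC subrK.
have := le_trans (HC r r0 r1) (Hc r r0 r1).
have half : r `^ b * (c / (2 * C)) / c = r `^ b / C / 2.
  by field; rewrite !gt_eqF.
have rbC : 0 < r `^ b / C by rewrite divr_gt0 // powR_gt0.
rewrite ra half; lra.
Qed.

Lemma psi_le_pow_near0 (k : nat) (a delta : R) : k%:R < a ->
  almost_incr (fun r => psi r / r `^ a) -> 0 < delta -> exists h, 0 < h <= 1 /\
    forall t, 0 < t -> t <= h -> psi t <= delta * t ^+ k.
Proof.
move=> ka /almost_incr_psi_le[c /andP[c0 _] Hc] delta0.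
have ak0 : 0 < a - k%:R by rewrite subr_gt0.
have x01 : 0 < Num.min (c * delta) 1 <= 1.
  by rewrite lt_min mulr_gt0 // ltr01 ge_min lexx orbT.
have [/andP[h0 h1] hak] := powR_root x01 ak0.
set h := _ `^ _ in h0 h1 hak; exists h; split=> [|t t0 th]; first by rewrite h0.
have t1 : t <= 1 by apply: le_trans th h1.
have ta : t `^ a = t ^+ k * t `^ (a - k%:R).
  by rewrite -powR_mulrn ?ltW // -powRD ?(gt_eqF t0, implybT) // addrC subrK.
have tak : t `^ (a - k%:R) <= c * delta.
  apply: (@le_trans _ _ (Num.min (c * delta) 1)); last by rewrite ge_min lexx.
  rewrite -hak; apply: ge0_ler_powR => //; rewrite ?nnegrE ?ltW //.
apply: (le_trans (Hc t t0 t1)); rewrite ta ler_pdivrMr // mulrC -mulrA.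
by rewrite mulrC [delta * _]mulrCA ler_pM2l ?exprn_gt0 // mulrC.
Qed.

Lemma mpsi_gtP {x : R} : (x%:E < mpsi psi)%E ->
  exists2 a, x < a & almost_incr (fun r => psi r / r `^ a).
Proof. by case/ereal_sup_gt => _ [a Ha <-]; rewrite lte_fin; exists a. Qed.

Lemma mpsi_le_of_Mpsi_lt {x : R} : (Mpsi psi < x%:E)%E -> (mpsi psi <= x%:E)%E.
Proof.
case/ereal_inf_lt => _ [b Hb <-]; rewrite lte_fin => bx.
apply: ge_ereal_sup => _ [a Ha <-]; rewrite lee_fin.
exact: le_trans (almost_incr_decr_exp_le Ha Hb) (ltW bx).
Qed.

Lemma Cpsi_Ck_psi {d : nat} (k : nat) {f : 'rV[R]_d -> R} :
  ((k%:R)%:E < mpsi psi)%E -> (Mpsi psi < (k.+1%:R)%:E)%E ->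
  Cpsi psi f -> Ck_psi k psi f.
Proof. by move=> km Mk /(_ k km); apply; apply: mpsi_le_of_Mpsi_lt. Qed.

End Exponents.

Section Norms.
Context {R : realType} {d : nat}.
Implicit Types (f g : 'rV[R]_d -> R) (psi : R -> R).

Lemma enorm_scale_evec (i : 'I_d) (t : R) : enorm (t *: evec i) = `|t|.
Proof.
rewrite /enorm (bigD1 i) //= big1 ?addr0.
  by rewrite /evec !mxE !eqxx mulr1 sqrtr_sqr.
by move=> j ji; rewrite /evec !mxE (negbTE ji) andbF mulr0 expr0n.
Qed.

Lemma C0norm_ub g x : (`|g x|%:E <= C0norm g)%E.
Proof. by apply: ereal_sup_ubound; exists x. Qed.

Lemma C0norm_fin g : Defs.bounded_fun g ->
  exists2 M, C0norm g = M%:E & forall x, `|g x| <= M.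
Proof.
move=> [M HM].
have lo := C0norm_ub g 0.
have hi : (C0norm g <= M%:E)%E.
  by apply: ge_ereal_sup => _ [y _ <-]; rewrite lee_fin.
have gfin : C0norm g \is a fin_num.
  by rewrite fin_numE; apply/andP; split; apply/negP => /eqP E;
    [rewrite E in lo | rewrite E in hi].
exists (fine (C0norm g)) => [|x]; first by rewrite fineK.
by rewrite -lee_fin fineK // C0norm_ub.
Qed.

Lemma DjC0norm_le (n : nat) f (b : R) :
  (forall (s : n.-tuple 'I_d) x, `|pds s f x| <= b) -> (DjC0norm n f <= b%:E)%E.
Proof.
move=> Hb; apply: bigmax_le => [|s _]; first exact: leNye.
by apply: ge_ereal_sup => _ [x _ <-]; rewrite lee_fin.
Qed.

Lemma DjC0norm_fin {n : nat} (i0 : 'I_d) {f} :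
  (forall s : n.-tuple 'I_d, Defs.bounded_fun (pds s f)) ->
  exists2 A, DjC0norm n f = A%:E & forall (s : n.-tuple 'I_d) x, `|pds s f x| <= A.
Proof.
move=> bd.
have hi : (DjC0norm n f < +oo)%E.
  apply: (big_ind (fun x => x < +oo)%E) => // [x y xo yo|s _].
    by rewrite /maxe; case: ifP.
  by have [M -> _] := C0norm_fin _ (bd s); exact: ltry.
have lo : (`|pds (nseq_tuple n i0) f 0|%:E <= DjC0norm n f)%E.
  exact: le_trans (C0norm_ub _ 0) (le_bigmax _ _ _).
have Afin : DjC0norm n f \is a fin_num.
  by rewrite fin_numE -ltey hi andbT; apply/negP => /eqP E; rewrite E in lo.
exists (fine (DjC0norm n f)) => [|s x]; first by rewrite fineK.
by rewrite -lee_fin fineK // (le_trans (C0norm_ub _ x)) // le_bigmax.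
Qed.

Lemma DjC0norm_dim0 (n : nat) (f : 'rV[R]_0 -> R) : DjC0norm n.+1 f = -oo%E.
Proof. by apply/eqP; rewrite -leeNy_eq; apply: bigmax_le => // s; case: (thead s). Qed.

Lemma semi_ub (k : nat) psi g x (h : 'rV[R]_d) : 0 < enorm h <= 1 ->
  ((`|g (x + h) - g x| / (psi (enorm h) * enorm h ^- k))%:E <= semi k psi g)%E.
Proof. by move=> hh; apply: ereal_sup_ubound; exists (x, h). Qed.

(* [i0] excludes [d = 0], where the empty maximum makes [Dksemi] equal to [-oo]. *)
Lemma le_add_Dksemi {k : nat} (i0 : 'I_d) {psi f} {X : \bar R} {a eps : R} :
  psi 1 = 1 -> 0 < eps ->
  (forall S, 0 <= S -> (forall s : k.-tuple 'I_d, (semi k psi (pds s f) <= S%:E)%E) ->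
     (X <= (a + eps * S)%:E)%E) ->
  (X <= a%:E + eps%:E * Dksemi k psi f)%E.
Proof.
move=> psi1 eps0 HX.
have [->|ny] := eqVneq (Dksemi k psi f) +oo%E.
  by rewrite muleC gt0_mulye ?lte_fin // addey // leey.
have lo : (0%:E <= Dksemi k psi f)%E.
  apply: le_trans (le_bigmax _ _ (nseq_tuple k i0)).
  apply: le_trans (semi_ub k psi _ 0 (1 *: evec i0) _).
    by rewrite enorm_scale_evec normr1 psi1 expr1n invr1 mulr1 divr1 lee_fin.
  by rewrite enorm_scale_evec normr1 ltr01 lexx.
have Sfin : Dksemi k psi f \is a fin_num.
  by rewrite fin_numE ny andbT; apply/negP => /eqP E; rewrite E in lo.
rewrite -(fineK Sfin) -EFinM -EFinD; apply: HX => [|s].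
  by rewrite -lee_fin fineK.
by rewrite fineK // le_bigmax.
Qed.

End Norms.

Section Increments.
Context {R : realType} {d : nat}.
Implicit Types (g : 'rV[R]_d -> R) (psi : R -> R).

Lemma MVT_evec {g} {i : 'I_d} x {h : R} : 0 < h ->
  (forall y, derivable g y (evec i)) ->
  exists2 t, 0 < t < h & g (x + h *: evec i) - g x = h * pd i g (x + t *: evec i).
Proof.
move=> h0 dg; pose G (s : R) := g (x + s *: evec i).
have quotE (t : R) : (fun s : R => s^-1 *: ((G \o shift t) (s *: 1) - G t)) =
    (fun s : R => s^-1 *: ((g \o shift (x + t *: evec i)) (s *: evec i)
                           - g (x + t *: evec i))).
  apply/funext => s /=; congr (_ *: (g _ - _)).
  by rewrite /shift /= [s%:A]mulr1 scalerDl addrC -addrA (addrC (t *: _)).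
have dG (t : R) : is_derive t (1 : R) G (pd i g (x + t *: evec i)).
  by split; rewrite /derivable /derive quotE //; exact: dg.
have cG : {within `[0, h], continuous G}.
  by apply: derivable_within_continuous => t _; case: (dG t).
have [t tin E] := MVT h0 (fun t _ => dG t) cG.
exists t; first by move: tin; rewrite in_itv.
by move: E; rewrite /G scale0r addr0 subr0 mulrC.
Qed.

Lemma increment_le_pd {g} {i : 'I_d} {B t : R} x : 0 < t ->
  (forall y, derivable g y (evec i)) -> (forall y, `|pd i g y| <= B) ->
  `|g (x + t *: evec i) - g x| <= t * B.
Proof.
move=> t0 dg HB; have [t' _ ->] := MVT_evec x t0 dg.
by rewrite normrM gtr0_norm // ler_pM2l.
Qed.

Lemma pd_le_increment {g} {i : 'I_d} {M h K : R} : 0 < h ->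
  (forall y, `|g y| <= M) -> (forall y, derivable g y (evec i)) ->
  (forall x t, 0 < t < h -> `|pd i g (x + t *: evec i) - pd i g x| <= K) ->
  forall x, `|pd i g x| <= 2 * M / h + K.
Proof.
move=> h0 bg dg HK x; have [t th E] := MVT_evec x h0 dg.
have endpoint : `|pd i g (x + t *: evec i)| <= 2 * M / h.
  rewrite ler_pdivlMr // mulrC -(gtr0_norm h0) -normrM -E.
  apply: (le_trans (ler_normB _ _)).
  by have := bg (x + h *: evec i); have := bg x; lra.
rewrite -[pd i g x](subrK (pd i g (x + t *: evec i))) addrC.
by apply: (le_trans (ler_normD _ _)); rewrite distrC lerD // HK.
Qed.

Lemma increment_le_semi {k : nat} {psi g} {S t delta : R} x (i : 'I_d) :
  (semi k psi g <= S%:E)%E -> 0 <= S -> 0 < t -> t <= 1 -> 0 < psi t ->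
  psi t <= delta * t ^+ k -> `|g (x + t *: evec i) - g x| <= S * delta.
Proof.
move=> HS S0 t0 t1 pt0 ptk.
have ht : 0 < enorm (t *: evec i) <= 1 by rewrite enorm_scale_evec (gtr0_norm t0) t0.
have := le_trans (semi_ub k psi g x _ ht) HS.
rewrite lee_fin !enorm_scale_evec (gtr0_norm t0) ler_pdivrMr; last first.
  by rewrite mulr_gt0 // invr_gt0 exprn_gt0.
move/le_trans; apply; apply: ler_wpM2l => //.
by rewrite ler_pdivrMr ?exprn_gt0.
Qed.

End Increments.

Lemma interpolation_absorb (R : realFieldType) (h F A B X : R) :
  0 < h <= 1 -> 0 <= X ->
  B <= 2 * A / h + X -> A <= 2 * F / (h / 4) + h / 4 * B ->
  A + B <= (16 / h + 32 / (h * h)) * F + 3 * X.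
Proof.
move=> /andP[h0 h1] X0 HB HA.
have hn : h != 0 by rewrite gt_eqF.
have hB : h / 4 * B <= A / 2 + h / 4 * X.
  have -> : A / 2 + h / 4 * X = h / 4 * (2 * A / h + X) by field.
  by rewrite ler_wpM2l // divr_ge0 // ltW.
have HA' : A <= 16 * F / h + h / 2 * X.
  have E : 2 * F / (h / 4) = 8 * F / h by field.
  rewrite E in HA; lra.
have HB' : 2 * A / h <= 32 * F / (h * h) + X.
  have -> : 32 * F / (h * h) + X = 2 / h * (16 * F / h + h / 2 * X) by field.
  by rewrite mulrAC ler_wpM2l // divr_ge0 // ltW.
have -> : (16 / h + 32 / (h * h)) * F = 16 * F / h + 32 * F / (h * h) by field.
have := ler_piMl X0 h1; lra.
Qed.

Section Interpolation.
Context {R : realType} {d : nat}.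
Context {psi : R -> R} {a : R}.
Hypothesis psi_pos : forall r, 0 < r -> r <= 1 -> 0 < psi r.
Hypothesis psi1 : psi 1 = 1.
Hypothesis psi_incr : almost_incr (fun r => psi r / r `^ a).

Lemma interpolation_C1 (i0 : 'I_d) (eps : R) : 1 < a -> 0 < eps ->
  exists2 C, 0 < C & forall f : 'rV[R]_d -> R, Ck_psi 1 psi f ->
    (DjC0norm 1 f <= C%:E * C0norm f + eps%:E * Dksemi 1 psi f)%E.
Proof.
move=> a1 eps0.
have [h [/andP[h0 h1] psi_h]] := psi_le_pow_near0 psi1 1 a eps a1 psi_incr eps0.
exists (2 / h); first by rewrite divr_gt0.
move=> f [_ [fd [fb _]]].
have [F -> HF] := C0norm_fin _ (fb [::] isT).2.
apply: (le_add_Dksemi i0 psi1 eps0) => S S0 HS.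
apply: DjC0norm_le => -[[|i [|? ?]] //= _] x.
rewrite mulrAC (mulrC eps).
apply: pd_le_increment h0 HF (fd [::] isT i) _ x => y t /andP[t0 th].
have t1 : t <= 1 := le_trans (ltW th) h1.
exact: increment_le_semi y i (HS [tuple i]) S0 t0 t1 (psi_pos t t0 t1) (psi_h t t0 (ltW th)).
Qed.

Lemma interpolation_C2 (i0 : 'I_d) (eps : R) : 2 < a -> 0 < eps ->
  exists2 C, 0 < C & forall f : 'rV[R]_d -> R, Ck_psi 2 psi f ->
    (DjC0norm 1 f + DjC0norm 2 f <= C%:E * C0norm f + eps%:E * Dksemi 2 psi f)%E.
Proof.
move=> a2 eps0.
have eps3 : 0 < eps / 3 by rewrite divr_gt0.
have [h [/andP[h0 h1] psi_h]] := psi_le_pow_near0 psi1 2 a (eps / 3) a2 psi_incr eps3.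
have h4 : 0 < h / 4 by rewrite divr_gt0.
exists (16 / h + 32 / (h * h)); first by rewrite addr_gt0 // divr_gt0 // mulr_gt0.
move=> f [_ [fd [fb _]]].
have bd n (s : n.-tuple 'I_d) : (n <= 2)%N -> Defs.bounded_fun (pds s f).
  by move=> n2; apply: (fb s _).2; rewrite size_tuple.
have [F -> HF] := C0norm_fin _ (bd 0%N [tuple] isT).
have [A EA HA] := DjC0norm_fin i0 (fun s => bd 1%N s isT).
have [B EB HB] := DjC0norm_fin i0 (fun s => bd 2%N s isT).
rewrite EA EB; apply: (le_add_Dksemi i0 psi1 eps0) => S S0 HS.
have B_le : B <= 2 * A / h + S * (eps / 3).
  rewrite -lee_fin -EB; apply: DjC0norm_le => -[[|i [|j [|? ?]]] //= _] x.
  apply: pd_le_increment h0 (HA [tuple j]) (fd [:: j] isT i) _ x => y t /andP[t0 th].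
  have t1 : t <= 1 := le_trans (ltW th) h1.
  exact: increment_le_semi y i (HS [tuple i; j]) S0 t0 t1 (psi_pos t t0 t1)
    (psi_h t t0 (ltW th)).
have A_le : A <= 2 * F / (h / 4) + h / 4 * B.
  rewrite -lee_fin -EA; apply: DjC0norm_le => -[[|j [|? ?]] //= _] x.
  apply: pd_le_increment h4 HF (fd [::] isT j) _ x => y t /andP[t0 th].
  apply: le_trans (increment_le_pd y t0 (fd [:: j] isT j) (HB [tuple j; j])) _.
  by rewrite ler_wpM2r ?(ltW th) // (le_trans (normr_ge0 _) (HB [tuple j; j] y)).
rewrite -EFinD lee_fin.
have -> : eps * S = 3 * (S * (eps / 3)) by field.
by apply: interpolation_absorb B_le A_le; rewrite ?h0 // mulr_ge0 // ltW.
Qed.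

End Interpolation.

Theorem lemma2p3 (R : realType) (d : nat) (psi : R -> R)
  (psi_pos : forall r : R, 0 < r -> r <= 1 -> 0 < psi r)
  (psi1 : psi 1 = 1)
  (psi0 : psi r @[r --> 0^'+] --> 0) :
  (((1%:E < mpsi psi)%E /\ (Mpsi psi < 2%:E)%E) ->
    exists eps0 : R, 0 < eps0 /\
      forall eps : R, 0 < eps -> eps < eps0 ->
      exists C : R, 0 < C /\
        forall f : 'rV[R]_d -> R, Cpsi psi f ->
          (DjC0norm 1 f <= C%:E * C0norm f + eps%:E * Dksemi 1 psi f)%E) /\
  (((2%:E < mpsi psi)%E /\ (Mpsi psi < 3%:E)%E) ->
    exists eps0 : R, 0 < eps0 /\
      forall eps : R, 0 < eps -> eps < eps0 ->
      exists C : R, 0 < C /\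
        forall f : 'rV[R]_d -> R, Cpsi psi f ->
          (DjC0norm 1 f + DjC0norm 2 f <= C%:E * C0norm f + eps%:E * Dksemi 2 psi f)%E).
Proof.
case: d => [|d].
  split=> _; exists 1; split=> // eps _ _; exists 1; split=> // f _;
    by rewrite !DjC0norm_dim0 ?leNye.
split=> -[m M].
- have [a a1 psi_incr] := mpsi_gtP m.
  exists 1; split=> // eps eps0 _.
  have [C C0 HC] := interpolation_C1 psi_pos psi1 psi_incr (@ord0 d) eps a1 eps0.
  by exists C; split=> // f /(Cpsi_Ck_psi psi1 1 m M)/HC.
- have [a a2 psi_incr] := mpsi_gtP m.
  exists 1; split=> // eps eps0 _.
  have [C C0 HC] := interpolation_C2 psi_pos psi1 psi_incr (@ord0 d) eps a2 eps0.
  by exists C; split=> // f /(Cpsi_Ck_psi psi1 2 m M)/HC.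
Qed.
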